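(* Let $v_1,\dots,v_m$ be nonzero vectors spanning $\mathbb{R}^n$ ($m\ge n$) such that $(\mathbb{R}^n,(v_i)_{i=1}^m)$ is irreducible, and let $c=(c_i)_{i=1}^m$ with $c_i>0$, $\sum_ic_i=n$. Let $D_c=\inf\{\det(\sum_i\lambda_iv_i\otimes v_i)/\prod_i\lambda_i^{c_i};\ \lambda_i>0\}$. If $(\lambda_i)_{i=1}^m$ and $(\mu_i)_{i=1}^m$ are $m$-tuples of positive numbers both attaining this infimum, then there exists $r\in\mathbb{R}$ such that $\lambda_i=r\mu_i$ for all $i$.
   Context: The relation $\bowtie$ on $\{1,\dots,m\}$: $i\bowtie j$ iff there is $K\subset\{1,\dots,m\}$ with $|K|=n-1$ such that both $(v_i,(v_k)_{k\in K})$ and $(v_j,(v_k)_{k\in K})$ are bases of $\mathbb{R}^n$. $(\mathbb{R}^n,(v_i)_{i=1}^m)$ is irreducible if any two indices are joined by a finite chain of $\bowtie$-related indices. $v\otimes v=vv^T$. *)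

From HB Require Import structures.
From mathcomp Require Import all_boot all_order all_algebra.
From mathcomp Require Import all_classical all_reals all_analysis.
From Stdlib Require Import Relations.
Set Implicit Arguments. Unset Strict Implicit. Unset Printing Implicit Defensive.
Import Order.TTheory GRing.Theory Num.Theory.
Local Open Scope ring_scope.

Section Defs.
Variables (R : realType) (n m : nat).

Definition is_basis (s : seq 'rV[R]_n) : bool :=
  (size s == n) && row_free (\matrix_(k < size s) nth 0 s k).

Definition spans (v : 'I_m -> 'rV[R]_n) : bool := row_full (\matrix_(i < m) v i).

Definition bowtie (v : 'I_m -> 'rV[R]_n) (i j : 'I_m) : Prop :=
  exists K : {set 'I_m}, #|K| = n.-1 /\
    is_basis (v i :: [seq v k | k <- enum K]) /\
    is_basis (v j :: [seq v k | k <- enum K]).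

Definition irreducible_family (v : 'I_m -> 'rV[R]_n) : Prop :=
  forall i j : 'I_m, clos_refl_trans 'I_m (bowtie v) i j.

(* v ⊗ v = v v^T  (v a row vector here, so this is v^T *m v) *)
Definition tens (x : 'rV[R]_n) : 'M[R]_n := x^T *m x.

Definition det_ratio (v : 'I_m -> 'rV[R]_n) (c lam : 'I_m -> R) : R :=
  \det (\sum_(i < m) lam i *: tens (v i)) / \prod_(i < m) (lam i `^ c i).

Definition Dc (v : 'I_m -> 'rV[R]_n) (c : 'I_m -> R) : R :=
  inf [set det_ratio v c lam | lam in [set lam : 'I_m -> R | forall i, 0 < lam i]].

End Defs.

(* By the Cauchy-Binet formula, det (sum_i g_i v_i (x) v_i) is, up to the factor
   1/n!, the sum over all maps f : [n] -> [m] of det(V_f)^2 prod_r g_(f r), where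
   V_f has rows v_(f 1), ..., v_(f n).  If lam and mu are minimizers, the
   geometric mean nu_i = sqrt(lam_i mu_i) is a competitor whose weight
   prod_i nu_i^c_i is the geometric mean of theirs, so
   det(nu)^2 >= det(lam) det(mu).  Cauchy-Schwarz gives the opposite
   inequality, and its equality case yields
   prod_r lam_(f r) prod_r mu_(g r) = prod_r lam_(g r) prod_r mu_(f r)
   whenever det V_f and det V_g are nonzero.  For i ⋈ j through K, the maps
   f = (i, K) and g = (j, K) give lam_i / mu_i = lam_j / mu_j, and
   irreducibility spreads this equality to all indices. *)

From HB Require Import structures.
From mathcomp Require Import all_boot all_order all_algebra.
From mathcomp Require Import all_classical all_reals all_analysis.
From mathcomp Require Import ring fingroup perm.
From Stdlib Require Import Relations.
Set Implicit Arguments. Unset Strict Implicit. Unset Printing Implicit Defensive.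
Import Order.TTheory GRing.Theory Num.Theory.
Local Open Scope ring_scope.

Lemma clos_refl_trans_eq_fun {T U : Type} {r : relation T} (h : T -> U) :
  (forall x y, r x y -> h x = h y) ->
  forall x y, clos_refl_trans T r x y -> h x = h y.
Proof. by move=> hr x y; elim=> [a b /hr | | a b e _ -> _ ->]. Qed.

Section CauchyBinet.
Variables (R : comNzRingType) (n m : nat).
Implicit Types (x y : 'I_m -> 'rV[R]_n) (f : {ffun 'I_n -> 'I_m}).

Lemma det_rows_mul x y f :
  \det (\matrix_(r < n) x (f r)) * \det (\matrix_(r < n) y (f r)) =
  \sum_(t : 'S_n) \sum_(s : 'S_n)
    (-1) ^+ t * (-1) ^+ s * \prod_r (x (f r) 0 (t r) * y (f r) 0 (s r)).
Proof.
rewrite /(\det _) mulr_suml; apply: eq_bigr => t _.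
rewrite mulr_sumr; apply: eq_bigr => s _.
rewrite big_split /= mulrACA; congr (_ * (_ * _)).
  by apply: eq_bigr => r _; rewrite mxE.
by apply: eq_bigr => r _; rewrite mxE.
Qed.

(* Cauchy-Binet, summed over all maps rather than increasing ones: each
   [n]-subset of rows is counted [n!] times. *)
Lemma det_sum_tr_mulmx x y :
  (n`!)%:R * \det (\sum_i (x i)^T *m y i) =
  \sum_(f : {ffun 'I_n -> 'I_m}) \det (\matrix_(r < n) x (f r)) * \det (\matrix_(r < n) y (f r)).
Proof.
set M := \sum_i _.
have ME a b : M a b = \sum_i x i 0 a * y i 0 b.
  by rewrite /M summxE; apply: eq_bigr => i _; rewrite !mxE big_ord1 !mxE.
have distr (t s : 'S_n) :
    \sum_(f : {ffun 'I_n -> 'I_m}) \prod_r (x (f r) 0 (t r) * y (f r) 0 (s r)) = \prod_r M (t r) (s r).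
  under [RHS]eq_bigr do rewrite ME.
  by rewrite bigA_distr_bigA.
have row_permM (t : 'S_n) :
    \sum_(s : 'S_n) (-1) ^+ t * (-1) ^+ s * \prod_r M (t r) (s r) = \det M.
  have <- : (-1) ^+ t * \det (row_perm t M) = \det M.
    by rewrite row_permE det_mulmx det_perm mulrA -signr_addb addbb mul1r.
  rewrite /(\det (row_perm t M)) mulr_sumr; apply: eq_bigr => s _.
  by rewrite mulrA; congr (_ * _); apply: eq_bigr => r _; rewrite mxE.
under eq_bigr do rewrite det_rows_mul.
rewrite exchange_big /= -(card_Sn n) mulr_natl -sumr_const.
apply: eq_bigr => t _; rewrite -(row_permM t) exchange_big /=.
by apply: eq_bigr => s _; rewrite -mulr_sumr distr.
Qed.

End CauchyBinet.

Lemma det_sum_scale_tens (R : realType) n m (v : 'I_m -> 'rV[R]_n) (g : 'I_m -> R) :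
  (n`!)%:R * \det (\sum_i g i *: tens (v i)) =
  \sum_(f : {ffun 'I_n -> 'I_m})
    (\det (\matrix_(r < n) v (f r)))^+2 * \prod_r g (f r).
Proof.
have -> : \sum_i g i *: tens (v i) = \sum_i (g i *: v i)^T *m v i.
  by apply: eq_bigr => i _; rewrite /tens linearZ /= scalemxAl.
rewrite det_sum_tr_mulmx; apply: eq_bigr => f _.
have -> : \matrix_(r < n) (g (f r) *: v (f r)) =
          diag_mx (\row_r g (f r)) *m \matrix_(r < n) v (f r).
  by rewrite mul_diag_mx; apply/matrixP => a b; rewrite !mxE.
rewrite det_mulmx det_diag [RHS]mulrC expr2 mulrA; congr (_ * _ * _).
by apply: eq_bigr => r _; rewrite mxE.
Qed.

Lemma lagrange_identity (R : comNzRingType) (I : finType) (d x y : I -> R) :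
  ((\sum_i d i * x i ^+ 2) * (\sum_i d i * y i ^+ 2)
     - (\sum_i d i * (x i * y i)) ^+ 2) *+ 2 =
  \sum_i \sum_j d i * d j * (x i * y j - x j * y i) ^+ 2.
Proof.
set A := \sum_i d i * x i ^+ 2; set B := \sum_i d i * y i ^+ 2.
set C := \sum_i d i * (x i * y i).
under [RHS]eq_bigr => i _.
  have -> : \sum_j d i * d j * (x i * y j - x j * y i) ^+ 2 =
      d i * x i ^+ 2 * B + A * (d i * y i ^+ 2) - (d i * (x i * y i) * C) *+ 2.
    rewrite /A /B /C mulr_sumr mulr_suml mulr_sumr -sumrMnl -big_split -sumrB /=.
    by apply: eq_bigr => j _; ring.
  over.
rewrite sumrB big_split /= sumrMnl -mulr_suml -mulr_sumr -mulr_suml -/A -/B -/C.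
ring.
Qed.

Lemma cauchy_schwarz_eq (R : realDomainType) (I : finType) (d x y : I -> R) :
  (forall i, 0 <= d i) ->
  (\sum_i d i * x i ^+ 2) * (\sum_i d i * y i ^+ 2) <=
    (\sum_i d i * (x i * y i)) ^+ 2 ->
  forall i j, d i != 0 -> d j != 0 -> x i * y j = x j * y i.
Proof.
move=> d_ge0 CS i j di_neq0 dj_neq0.
have term_ge0 k l : 0 <= d k * d l * (x k * y l - x l * y k) ^+ 2.
  by rewrite mulr_ge0 ?sqr_ge0 // mulr_ge0.
have sum0 : \sum_k \sum_l d k * d l * (x k * y l - x l * y k) ^+ 2 = 0.
  apply/le_anti; rewrite -[X in X <= 0]lagrange_identity mulrn_wle0 ?subr_le0 //=.
  by apply: sumr_ge0 => k _; apply: sumr_ge0.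
have row0 k : \sum_l d k * d l * (x k * y l - x l * y k) ^+ 2 = 0.
  by apply: (psumr_eq0P _ sum0) => // k' _; apply: sumr_ge0.
have /eqP : d i * d j * (x i * y j - x j * y i) ^+ 2 = 0.
  by apply: (psumr_eq0P _ (row0 i)).
by rewrite !mulf_eq0 (negPf di_neq0) (negPf dj_neq0) /= orbb subr_eq0 => /eqP.
Qed.

Section Minimizers.
Variables (R : realType) (n m : nat) (v : 'I_m -> 'rV[R]_n) (c : 'I_m -> R).

Let minor (f : {ffun 'I_n -> 'I_m}) := \det (\matrix_(r < n) v (f r)).
Let gram (g : 'I_m -> R) := \det (\sum_i g i *: tens (v i)).
Let weight (g : 'I_m -> R) := \prod_i g i `^ c i.

Lemma gram_expand g :
  gram g = (n`!%:R)^-1 * \sum_(f : {ffun 'I_n -> 'I_m}) minor f ^+ 2 * \prod_r g (f r).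
Proof. by rewrite -det_sum_scale_tens mulKf // pnatr_eq0 -lt0n fact_gt0. Qed.

Lemma gram_ge0 g : (forall i, 0 <= g i) -> 0 <= gram g.
Proof.
move=> g_ge0; rewrite gram_expand mulr_ge0 ?invr_ge0 ?ler0n //.
by apply: sumr_ge0 => f _; rewrite mulr_ge0 ?sqr_ge0 ?prodr_ge0.
Qed.

Lemma weight_gt0 g : (forall i, 0 < g i) -> 0 < weight g.
Proof. by move=> g_gt0; apply: prodr_gt0 => i _; apply: powR_gt0. Qed.

Lemma det_ratio_ge0 g : (forall i, 0 < g i) -> 0 <= det_ratio v c g.
Proof.
move=> g_gt0; apply: divr_ge0; last exact/ltW/weight_gt0.
by apply: gram_ge0 => i; apply: ltW.
Qed.

Lemma Dc_le_det_ratio g : (forall i, 0 < g i) -> Dc v c <= det_ratio v c g.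
Proof.
move=> g_gt0; apply: ge_inf; last by exists g.
by exists 0 => _ [h h_gt0 <-]; apply: det_ratio_ge0.
Qed.

Lemma weight_sqrtM lam mu : (forall i, 0 <= lam i) -> (forall i, 0 <= mu i) ->
  weight (fun i => Num.sqrt (lam i) * Num.sqrt (mu i)) ^+ 2 = weight lam * weight mu.
Proof.
move=> lam_ge0 mu_ge0; rewrite -prodrXl -big_split /=; apply: eq_bigr => i _.
rewrite expr2 -powRM ?mulr_ge0 // -powRM //.
by rewrite mulrACA -!expr2 !sqr_sqrtr.
Qed.

Lemma is_basis_cons_minor i (l : seq 'I_m) : is_basis (v i :: map v l) ->
  exists2 f : {ffun 'I_n -> 'I_m}, minor f != 0 &
    forall h : 'I_m -> R, \prod_r h (f r) = h i * \prod_(k <- l) h k.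
Proof.
case/andP => /eqP size_l free_l.
have size_il : size (i :: l) = n by rewrite -size_l /= size_map.
exists [ffun r : 'I_n => nth i (i :: l) r]; last first.
  move=> h; transitivity (\prod_(k <- i :: l) h k); last by rewrite big_cons.
  by rewrite (big_nth i) size_il big_mkord; apply: eq_bigr => r _; rewrite ffunE.
rewrite /minor; have -> : \matrix_(r < n) v ([ffun r : 'I_n => nth i (i :: l) r] r) =
    castmx (size_l, erefl) (\matrix_(k < size (v i :: map v l)) nth 0 (v i :: map v l) k).
  apply/matrixP => a b; rewrite castmxE !mxE ffunE /= cast_ord_id.
  by rewrite -map_cons (nth_map i) // size_il.
by rewrite -unitfE -unitmxE -row_free_unit row_free_castmx.
Qed.

Section TwoMinimizers.
Variables lam mu : 'I_m -> R.
Hypotheses (lam_gt0 : forall i, 0 < lam i) (mu_gt0 : forall i, 0 < mu i).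
Hypotheses (lam_min : det_ratio v c lam = Dc v c) (mu_min : det_ratio v c mu = Dc v c).

Lemma minimizers_gram_geomean :
  gram lam * gram mu <= gram (fun i => Num.sqrt (lam i) * Num.sqrt (mu i)) ^+ 2.
Proof.
set nu := fun i => _.
have nu_gt0 i : 0 < nu i by rewrite mulr_gt0 ?sqrtr_gt0.
have gram_min g : (forall i, 0 < g i) -> det_ratio v c g = Dc v c ->
    gram g = Dc v c * weight g.
  by move=> g_gt0 <-; rewrite divfK // gt_eqF ?weight_gt0.
have gram_nu : Dc v c * weight nu <= gram nu.
  by rewrite -ler_pdivlMr ?weight_gt0 //; apply: Dc_le_det_ratio.
have Dc_ge0 : 0 <= Dc v c by rewrite -lam_min det_ratio_ge0.
have weight_nu : weight lam * weight mu = weight nu ^+ 2.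
  by rewrite weight_sqrtM // => i; apply: ltW.
rewrite (gram_min lam) // (gram_min mu) // mulrACA -expr2 weight_nu -exprMn.
have lower_ge0 : 0 <= Dc v c * weight nu by rewrite mulr_ge0 //; exact/ltW/weight_gt0.
by rewrite lerXn2r ?nnegrE // (le_trans lower_ge0 gram_nu).
Qed.

Lemma minimizers_minor_cross (f g : {ffun 'I_n -> 'I_m}) :
  minor f != 0 -> minor g != 0 ->
  \prod_r lam (f r) * \prod_r mu (g r) = \prod_r lam (g r) * \prod_r mu (f r).
Proof.
move=> minor_f minor_g.
pose sq (a : 'I_m -> R) (h : {ffun 'I_n -> 'I_m}) := \prod_r Num.sqrt (a (h r)).
have sqE a h : (forall i, 0 < a i) -> sq a h ^+ 2 = \prod_r a (h r).
  by move=> a_gt0; rewrite -prodrXl; apply: eq_bigr => r _; rewrite sqr_sqrtr ?ltW.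
have gram_sq a : (forall i, 0 < a i) ->
    gram a = (n`!%:R)^-1 * \sum_h minor h ^+ 2 * sq a h ^+ 2.
  by move=> a_gt0; rewrite gram_expand; congr (_ * _); apply: eq_bigr => h _; rewrite sqE.
have gram_nu : gram (fun i => Num.sqrt (lam i) * Num.sqrt (mu i)) =
    (n`!%:R)^-1 * \sum_h minor h ^+ 2 * (sq lam h * sq mu h).
  by rewrite gram_expand; congr (_ * _); apply: eq_bigr => h _; rewrite big_split.
have k_gt0 : 0 < (n`!%:R : R)^-1 by rewrite invr_gt0 ltr0n fact_gt0.
have CS := minimizers_gram_geomean.
rewrite gram_sq // gram_sq // gram_nu mulrACA -expr2 exprMn ler_pM2l ?exprn_gt0 // in CS.
have := cauchy_schwarz_eq (fun h => sqr_ge0 (minor h)) CS (i := f) (j := g).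
rewrite !sqrf_eq0 => /(_ minor_f minor_g) /(congr1 (fun t => t ^+ 2)).
by rewrite !exprMn !sqE.
Qed.

Lemma bowtie_minimizers_ratio i j : bowtie v i j -> lam i / mu i = lam j / mu j.
Proof.
case=> K [_ [basis_i basis_j]].
have [f minor_f prod_f] := is_basis_cons_minor basis_i.
have [g minor_g prod_g] := is_basis_cons_minor basis_j.
have PL_gt0 : 0 < \prod_(k <- enum K) lam k by apply: prodr_gt0.
have PM_gt0 : 0 < \prod_(k <- enum K) mu k by apply: prodr_gt0.
apply/eqP; rewrite eqr_div ?lt0r_neq0 //; apply/eqP.
apply: (mulIf (lt0r_neq0 (mulr_gt0 PL_gt0 PM_gt0))).
have cross := minimizers_minor_cross minor_f minor_g.
rewrite !prod_f !prod_g in cross.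
by rewrite mulrACA cross mulrACA.
Qed.

End TwoMinimizers.
End Minimizers.

Theorem proposition8 (R : realType) (n m : nat) (v : 'I_m -> 'rV[R]_n)
    (c lam mu : 'I_m -> R) :
  (n <= m)%N ->
  (forall i, v i != 0) ->
  spans v ->
  irreducible_family v ->
  (forall i, 0 < c i) ->
  \sum_(i < m) c i = n%:R ->
  (forall i, 0 < lam i) ->
  (forall i, 0 < mu i) ->
  det_ratio v c lam = Dc v c ->
  det_ratio v c mu = Dc v c ->
  exists r : R, forall i, lam i = r * mu i.
Proof.
(* Once both minima are attained, neither the normalisation of c nor the
   nondegeneracy of v plays any role. *)
move=> _ _ _ irr _ _ lam_gt0 mu_gt0 lam_min mu_min.
have ratio_eq i j : lam i / mu i = lam j / mu j.
  apply: (clos_refl_trans_eq_fun (h := fun k => lam k / mu k) _ (irr i j)) => a b ab.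
  exact: (bowtie_minimizers_ratio lam_gt0 mu_gt0 lam_min mu_min ab).
case: (pickP 'I_m) => [i0 _ | no_index]; last by exists 0 => i; have := no_index i.
by exists (lam i0 / mu i0) => i; rewrite (ratio_eq i0 i) divfK ?lt0r_neq0.
Qed.
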